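(* Let $H$ be a finite-dimensional complex Hilbert space, $h_1,h_2$ subspaces of $H$, $\ket s\in H$ a unit vector, and $p[\Pi(h)]=\bra s\Pi(h)\ket s$. Set $S=p[\Pi(h_1)]+p[\Pi(h_2)]+\bra s\mathfrak D(h_1,h_2)\ket s$, $\mathfrak B_U=S$ and, when $p[\Pi(h_1\vee h_2)]>0$, $\mathfrak B_L=\dfrac{S^2}{S+2p[\Pi(h_1\wedge h_2)]}$. Then (1) $p[\Pi(h_1\vee h_2)]\le \mathfrak B_U$, and if $p[\Pi(h_1\vee h_2)]>0$ then $\mathfrak B_L\le p[\Pi(h_1\vee h_2)]$. (2) If at least one of the following holds: (i) $\Pi(h_1)$ and $\Pi(h_2)$ commute; (ii) $\ket s\in h_1\wedge h_2$; (iii) $\ket s\in (h_1\vee h_2)^\perp=h_1^\perp\wedge h_2^\perp$; then $\bra s\mathfrak D(h_1,h_2)\ket s=0$ and the classical Boole inequality $p[\Pi(h_1\vee h_2)]\le p[\Pi(h_1)]+p[\Pi(h_2)]$ holds, and moreover, whenever $p[\Pi(h_1)]+p[\Pi(h_2)]+2p[\Pi(h_1\wedge h_2)]>0$, the classical Chung–Erdős inequality $\dfrac{(p[\Pi(h_1)]+p[\Pi(h_2)])^2}{p[\Pi(h_1)]+p[\Pi(h_2)]+2p[\Pi(h_1\wedge h_2)]}\le p[\Pi(h_1\vee h_2)]$ holds.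
   Context: For subspaces $h,h'$ of $H$: $h\wedge h'=h\cap h'$, $h\vee h'=\mathrm{span}(h\cup h')$, $h^\perp$ is the orthogonal complement, and $\Pi(h)$ is the orthogonal projector onto $h$. Define the operator $\mathfrak D(h_1,h_2)=\Pi(h_1\vee h_2)-\Pi(h_1)-\Pi(h_2)+\Pi(h_1\wedge h_2)$. *)

From HB Require Import structures.
From mathcomp Require Import all_boot all_order all_algebra.
Set Implicit Arguments. Unset Strict Implicit. Unset Printing Implicit Defensive.
Import Order.TTheory GRing.Theory Num.Theory.
Local Open Scope ring_scope.

(* The finite-dimensional complex Hilbert space H is modelled as the row
   vectors 'rV[C]_n over a numeric algebraically closed field C (e.g. algC),
   with the standard inner product <u,v> = \sum_i u_i (v_i)^*.
   Subspaces of H are represented (as in mxalgebra) by the row space of a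
   matrix h : 'M[C]_n.  Operators act on row vectors on the right. *)

Section Defs.
Variable C : numClosedFieldType.
Variable n : nat.

Definition adjmx (m p : nat) (A : 'M[C]_(m, p)) : 'M[C]_(p, m) :=
  map_mx (@Num.conj C) A^T.

Definition meet (h h' : 'M[C]_n) : 'M[C]_n := (h :&: h')%MS.
Definition join (h h' : 'M[C]_n) : 'M[C]_n := (h + h')%MS.

Definition ocompl (h : 'M[C]_n) : 'M[C]_n := orthomx (@Num.conj C) 1%:M h.

Definition Pi (h : 'M[C]_n) : 'M[C]_n := proj_ortho h.

Definition Dop (h1 h2 : 'M[C]_n) : 'M[C]_n :=
  Pi (join h1 h2) - Pi h1 - Pi h2 + Pi (meet h1 h2).

Definition braket (s : 'rV[C]_n) (A : 'M[C]_n) : C :=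
  (s *m A *m adjmx s) 0 0.

Definition prob (s : 'rV[C]_n) (h : 'M[C]_n) : C := braket s (Pi h).

End Defs.

From HB Require Import structures.
From mathcomp Require Import all_boot all_order all_algebra.
From mathcomp Require Import ring.
Import Order.TTheory GRing.Theory Num.Theory.
Set Implicit Arguments. Unset Strict Implicit. Unset Printing Implicit Defensive.
Local Open Scope ring_scope.

(* Write a = p[Pi(h1 \/ h2)], b = p[Pi(h1 /\ h2)] and p_i = p[Pi(h_i)].  The
   key observation is that <s|D|s> = a - p_1 - p_2 + b by linearity, so
   S = a + b on the nose.  Since p[Pi(h)] = |s Pi(h)|^2 is nonnegative and
   monotone in h, we get 0 <= b <= a; then a <= a + b = B_U is immediate and
   B_L = (a + b)^2 / (a + 3b) <= a is the elementary inequality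
   a (a + 3b) - (a + b)^2 = b (a - b) >= 0.
   For part (2) it suffices to show <s|D|s> = 0 under each hypothesis, for
   then p_1 + p_2 = S and the classical bounds are the bounds of part (1):
   if the projectors commute, Pi(h1 /\ h2) = Pi(h1) Pi(h2) and
   Pi(h1 \/ h2) = Pi(h1) + Pi(h2) - Pi(h1) Pi(h2), so D = 0 altogether;
   if s lies in h1 /\ h2 (resp. is orthogonal to h1 \/ h2) then every
   projector in D fixes (resp. kills) s, and the four terms cancel. *)

Section OrthogonalProjectors.
Variables (C : numClosedFieldType) (n : nat).
Implicit Types (U V : 'M[C]_n) (s w : 'rV[C]_n).

Lemma adjmxD m p (A B : 'M[C]_(m, p)) : adjmx (A + B) = adjmx A + adjmx B.
Proof. by apply/matrixP => i j; rewrite !mxE rmorphD. Qed.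

Definition sqnorm w : C := (w *m adjmx w) 0 0.

Lemma sqnorm_ge0 w : 0 <= sqnorm w.
Proof.
rewrite /sqnorm mxE; apply: sumr_ge0 => i _; rewrite !mxE; exact: mul_conjC_ge0.
Qed.

Lemma submx_diff m1 m2 (A B : 'M[C]_(m1, n)) (D : 'M[C]_(m2, n)) :
  (A <= D)%MS -> (B <= D)%MS -> (A - B <= D)%MS.
Proof. by move=> AD BD; apply: addmx_sub => //; rewrite (eqmx_opp B). Qed.

Lemma ocomplS U V : (U <= V)%MS -> (ocompl V <= ocompl U)%MS.
Proof. by move=> UV; rewrite submx_ortho. Qed.

Lemma ortho_compl_adjmx m1 m2 U (a : 'M[C]_(m1, n)) (b : 'M[C]_(m2, n)) :
  (a <= U)%MS -> (b <= ocompl U)%MS -> b *m adjmx a = 0.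
Proof.
by move=> aU bU; apply/orthomx1P; apply: submx_trans bU _; rewrite submx_ortho.
Qed.

Lemma ortho_adjmx_compl m1 m2 U (a : 'M[C]_(m1, n)) (b : 'M[C]_(m2, n)) :
  (a <= U)%MS -> (b <= ocompl U)%MS -> a *m adjmx b = 0.
Proof.
move=> aU bU; apply/orthomx1P; rewrite orthomx_sym.
by apply: submx_trans bU _; rewrite submx_ortho.
Qed.

Lemma sqnormD U (a b : 'rV[C]_n) :
  (a <= U)%MS -> (b <= ocompl U)%MS -> sqnorm (a + b) = sqnorm a + sqnorm b.
Proof.
move=> aU bU; rewrite /sqnorm adjmxD mulmxDl !mulmxDr.
by rewrite (ortho_compl_adjmx aU bU) (ortho_adjmx_compl aU bU) addr0 add0r mxE.
Qed.

Lemma sqnorm_proj_le U w : sqnorm (w *m Pi U) <= sqnorm w.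
Proof.
rewrite -[w in X in _ <= X](subrK (w *m Pi U)) addrC.
rewrite (sqnormD (proj_ortho_sub _ _) (proj_ortho_compl_sub _ _)).
by rewrite lerDl sqnorm_ge0.
Qed.

Lemma prob_sqnorm s U : prob s U = sqnorm (s *m Pi U).
Proof.
rewrite /prob /braket /sqnorm -[s in adjmx s](subrK (s *m Pi U)) adjmxD.
by rewrite mulmxDr (ortho_adjmx_compl (proj_ortho_sub _ _)
  (proj_ortho_compl_sub _ _)) add0r.
Qed.

Lemma prob_ge0 s U : 0 <= prob s U.
Proof. by rewrite prob_sqnorm sqnorm_ge0. Qed.

(* p[Pi(.)] is monotone: for U <= V, projecting onto U factors through V. *)
Lemma prob_mono s U V : (U <= V)%MS -> prob s U <= prob s V.
Proof.
move=> UV; rewrite !prob_sqnorm.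
have sVperp : (s - s *m Pi V <= ocompl U)%MS.
  exact: submx_trans (proj_ortho_compl_sub _ _) (ocomplS UV).
have /eqP : (s - s *m Pi V) *m Pi U = 0 by exact: proj_ortho_0.
by rewrite mulmxBl subr_eq0 => /eqP ->; exact: sqnorm_proj_le.
Qed.

Lemma Pi_sub U : (Pi U <= U)%MS.
Proof. by rewrite -[Pi U]mul1mx proj_ortho_sub. Qed.

Lemma Pi_compl_sub U : (1%:M - Pi U <= ocompl U)%MS.
Proof. by have := proj_ortho_compl_sub U (1%:M : 'M[C]_n); rewrite mul1mx. Qed.

Lemma Pi_unique U (Q : 'M[C]_n) :
  (Q <= U)%MS -> (1%:M - Q <= ocompl U)%MS -> Pi U = Q.
Proof.
move=> QU QUperp; rewrite -[Pi U]mul1mx -[1%:M](subrK Q) mulmxDl.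
by rewrite (proj_ortho_0 QUperp) (proj_ortho_id QU) add0r.
Qed.

Lemma ocompl_join (X : 'M[C]_n) U V :
  (X <= ocompl U)%MS -> (X <= ocompl V)%MS -> (X <= ocompl (join U V))%MS.
Proof. by rewrite !(orthomx_sym _ X) => XU XV; rewrite addsmx_sub XU XV. Qed.

Section Commuting.
Variables U V : 'M[C]_n.
Hypothesis PiUV : Pi U *m Pi V = Pi V *m Pi U.

Lemma Pi_meet_comm : Pi (meet U V) = Pi U *m Pi V.
Proof.
apply: Pi_unique.
  by rewrite sub_capmx {1}PiUV !proj_ortho_sub.
rewrite -[1%:M](subrK (Pi U)) -addrA; apply: addmx_sub.
  exact: submx_trans (Pi_compl_sub U) (ocomplS (capmxSl _ _)).
exact: submx_trans (proj_ortho_compl_sub _ _) (ocomplS (capmxSr _ _)).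
Qed.

Lemma Pi_join_comm : Pi (join U V) = Pi U + Pi V - Pi U *m Pi V.
Proof.
have splitB (x a b c : 'M[C]_n) : x - (a + b - c) = (x - a) - (b - c).
  by rewrite !opprD !opprK !addrA.
apply: Pi_unique.
  apply: submx_diff; last exact: submx_trans (proj_ortho_sub _ _) (addsmxSr _ _).
  apply: addmx_sub; first exact: submx_trans (Pi_sub U) (addsmxSl _ _).
  exact: submx_trans (Pi_sub V) (addsmxSr _ _).
apply: ocompl_join.
  rewrite [Pi U + _]addrC splitB PiUV -{1}[Pi U]mul1mx -mulmxBl.
  exact: proj_ortho_compl_sub.
rewrite splitB -{1}[Pi V]mul1mx -mulmxBl; exact: proj_ortho_compl_sub.
Qed.

Lemma Dop_comm : Dop U V = 0.
Proof.
rewrite /Dop Pi_join_comm Pi_meet_comm [Pi U + _]addrC.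
by rewrite (addrAC (Pi V + Pi U)) addrK (addrAC (Pi V)) subrr add0r addNr.
Qed.

End Commuting.

Lemma braketD s (A B : 'M[C]_n) : braket s (A + B) = braket s A + braket s B.
Proof. by rewrite /braket mulmxDr mulmxDl mxE. Qed.

Lemma braketN s (A : 'M[C]_n) : braket s (- A) = - braket s A.
Proof. by rewrite /braket mulmxN mulNmx mxE. Qed.

Lemma braket_Dop s U V : braket s (Dop U V) =
  prob s (join U V) - prob s U - prob s V + prob s (meet U V).
Proof. by rewrite /Dop !braketD !braketN. Qed.

Lemma braket_Dop_eq0 s U V : sqnorm s = 1 ->
  [\/ Pi U *m Pi V = Pi V *m Pi U, (s <= meet U V)%MS
     | (s <= ocompl (join U V))%MS] ->
  braket s (Dop U V) = 0.
Proof.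
move=> s1; case=> [PiUV | sUV | sUVperp].
- by rewrite Dop_comm // /braket mulmx0 mul0mx mxE.
- have sU : (s <= U)%MS := submx_trans sUV (capmxSl _ _).
  have sV : (s <= V)%MS := submx_trans sUV (capmxSr _ _).
  have fixes W : (s <= W)%MS -> prob s W = 1.
    by move=> sW; rewrite /prob /braket (proj_ortho_id sW).
  rewrite braket_Dop !fixes //; first by rewrite subrr sub0r addNr.
  exact: submx_trans sU (addsmxSl _ _).
- have kills W : (s <= ocompl W)%MS -> prob s W = 0.
    by move=> sW; rewrite /prob /braket (proj_ortho_0 sW) mul0mx mxE.
  have sU : (s <= ocompl U)%MS := submx_trans sUVperp (ocomplS (addsmxSl _ _)).
  have sV : (s <= ocompl V)%MS := submx_trans sUVperp (ocomplS (addsmxSr _ _)).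
  rewrite braket_Dop !kills //; first by rewrite !subr0 addr0.
  exact: submx_trans sU (ocomplS (capmxSl _ _)).
Qed.

End OrthogonalProjectors.

(* The Chung-Erdos type estimate: if 0 <= b <= a then
   (a + b)^2 / (a + 3b) <= a, since a (a + 3b) - (a + b)^2 = b (a - b). *)
Lemma chung_erdos_ratio (R : numFieldType) (a b : R) :
  0 <= b -> b <= a -> 0 < a + b + 2 * b -> (a + b) ^+ 2 / (a + b + 2 * b) <= a.
Proof.
move=> b_ge0 ba pos; rewrite ler_pdivrMr // -subr_ge0.
have -> : a * (a + b + 2 * b) - (a + b) ^+ 2 = b * (a - b) by ring.
by rewrite mulr_ge0 // subr_ge0.
Qed.

Theorem mainTheorem3 (C : numClosedFieldType) (n : nat)
  (h1 h2 : 'M[C]_n) (s : 'rV[C]_n) :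
  (s *m adjmx s) 0 0 = 1 ->
  let S := prob s h1 + prob s h2 + braket s (Dop h1 h2) in
  let BU := S in
  let BL := S ^+ 2 / (S + 2 * prob s (meet h1 h2)) in
  (prob s (join h1 h2) <= BU /\
   (0 < prob s (join h1 h2) -> BL <= prob s (join h1 h2))) /\
  ([\/ Pi h1 *m Pi h2 = Pi h2 *m Pi h1,
       (s <= meet h1 h2)%MS
     | (s <= ocompl (join h1 h2))%MS] ->
   [/\ braket s (Dop h1 h2) = 0,
       prob s (join h1 h2) <= prob s h1 + prob s h2
     & 0 < prob s h1 + prob s h2 + 2 * prob s (meet h1 h2) ->
       (prob s h1 + prob s h2) ^+ 2
         / (prob s h1 + prob s h2 + 2 * prob s (meet h1 h2))
       <= prob s (join h1 h2)]).
Proof.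
move=> s1 S BU BL; set a := prob s (join h1 h2); set b := prob s (meet h1 h2).
have S_ab : S = a + b.
  by rewrite /S braket_Dop -/a -/b; ring.
have b_ge0 : 0 <= b := prob_ge0 s _.
have ba : b <= a by apply: prob_mono; exact: submx_trans (capmxSl _ _) (addsmxSl _ _).
have a_le_ab : a <= a + b by rewrite lerDl.
split.
  split=> [|a_gt0]; first by rewrite /BU S_ab.
  rewrite /BL S_ab; apply: chung_erdos_ratio => //.
  by rewrite -addrA ltr_wpDr // addr_ge0 // mulr_ge0.
move=> cond; have D0 := braket_Dop_eq0 s1 cond.
have p12 : prob s h1 + prob s h2 = a + b by rewrite -S_ab /S D0 addr0.
by split=> //; rewrite p12 //; exact: chung_erdos_ratio.
Qed.
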